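(* Let $I$ be a small directed category and let $p_I:A_I\to I$ be the functor constructed from $I$ as described in the context. Then $p_I$ is cofinal, i.e. for every object $i$ of $I$ the over category $(p_I)_{/i}$ is nonempty and connected.
   Context: Posets are categories with a unique morphism $u\to v$ iff $u\geq v$. A subset $R$ of a poset $T$ is a section if $x\in R$, $y<x$ imply $y\in R$. For a category $\mathcal{R}$, $\mathcal{R}^{\lhd}$ is $\mathcal{R}$ with a new initial object $\infty$ adjoined. A category $I$ is directed if nonempty, any two objects admit an object mapping to both, and any parallel pair $f,g:s\to t$ is equalized by some $h:u\to s$. The over category $(p)_{/i}$ has objects pairs $(a, p(a)\to i)$. Construction: set $A_I^{-1}=\emptyset$ and $p^{-1}_I$ the empty functor. Given a poset $A_I^n$ and a functor $p_I^n:A_I^n\to I$, let $B_I^{n+1}$ be the set of pairs $(R,p)$ with $R$ a finite section of $A_I^n$ and $p:R^{\lhd}\to I$ a functor with $p|_R=p_I^n|_R$. Set $A_I^{n+1}=A_I^n\sqcup B_I^{n+1}$, with the order of $A_I^n$ extended by $c<(R,p)$ iff $c\in R$ (for $c\in A_I^n$), and $p_I^{n+1}$ extending $p_I^n$ with $p_I^{n+1}(R,p)=p(\infty)$ (on morphisms $(R,p)\to c$ it is $p(\infty\to c)$). Let $A_I=\bigcup_n A_I^n$ and $p_I:A_I\to I$ the union of the $p_I^n$. *)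

From Stdlib Require Import List Relations.

Record Cat : Type := {
  Ob : Type;
  Hom : Ob -> Ob -> Type;
  cid : forall a, Hom a a;
  ccomp : forall a b c, Hom b c -> Hom a b -> Hom a c;
  ccomp_id_l : forall a b (f : Hom a b), ccomp a b b (cid b) f = f;
  ccomp_id_r : forall a b (f : Hom a b), ccomp a a b f (cid a) = f;
  ccomp_assoc : forall a b c d (f : Hom c d) (g : Hom b c) (h : Hom a b),
      ccomp a c d f (ccomp a b c g h) = ccomp a b d (ccomp b c d f g) h
}.
Arguments Hom {_} _ _.
Arguments cid {_} _.
Arguments ccomp {_ _ _ _} _ _.

Definition directed (I : Cat) : Prop :=
  inhabited (Ob I) /\
  (forall a b : Ob I, exists c (f : Hom c a) (g : Hom c b), True) /\
  (forall (s t : Ob I) (f g : Hom s t),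
      exists (u : Ob I) (h : Hom u s), ccomp f h = ccomp g h).

Definition castHom {I : Cat} {a b b' : Ob I} (e : b = b') (f : Hom a b) : Hom a b' :=
  eq_rect b (fun x => Hom a x) f b' e.

Section Construction.
Variable I : Cat.

(** A stage: a poset [car] with order [ge x y] ("x >= y", i.e. a morphism x -> y)
    and a functor [pob]/[pmo] to I. *)
Record Stage : Type := {
  car : Type;
  ge : car -> car -> Prop;
  pob : car -> Ob I;
  pmo : forall x y, ge x y -> Hom (pob x) (pob y)
}.

(** The new elements B^{n+1} built over a stage S = (A^n, p^n):
    pairs (R, p) with R a finite section of A^n and p : R^◁ -> I a functor
    extending p^n|_R.  Such a functor is exactly the data of the object
    p(∞) = [bv], the morphisms p(∞ -> c) = [bf c] for c in R, and
    functoriality on the composites ∞ -> c -> d ([bcone]); on R it is p^n. *)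
Record Bel (S : Stage) : Type := {
  bR : car S -> Prop;
  bfin : exists l : list (car S), forall x, bR x -> In x l;
  bsec : forall x y, bR x -> ge S x y -> bR y;
  bv : Ob I;
  bf : forall c, bR c -> Hom bv (pob S c);
  bcone : forall c d (hc : bR c) (hd : bR d) (h : ge S c d),
      ccomp (pmo S c d h) (bf c hc) = bf d hd
}.
Arguments bR {S} _ _.
Arguments bv {S} _.
Arguments bf {S} _ _ _.

Definition next_car (S : Stage) : Type := (car S + Bel S)%type.

Definition next_ge (S : Stage) (x y : next_car S) : Prop :=
  match x, y with
  | inl a, inl b => ge S a b
  | inr b, inr b' => b = b'
  | inr b, inl c => bR b c
  | inl _, inr _ => False
  end.

Definition next_pob (S : Stage) (x : next_car S) : Ob I :=
  match x with inl a => pob S a | inr b => bv b end.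

Definition next_pmo (S : Stage) :
  forall x y, next_ge S x y -> Hom (next_pob S x) (next_pob S y) :=
  fun x y =>
  match x as x0, y as y0
        return next_ge S x0 y0 -> Hom (next_pob S x0) (next_pob S y0) with
  | inl a, inl b => fun h => pmo S a b h
  | inr b, inr b' => fun h => eq_rect b (fun z => Hom (bv b) (bv z)) (cid (bv b)) b' h
  | inr b, inl c => fun h => bf b c h
  | inl a, inr b => fun h => False_rect _ h
  end.

Definition next (S : Stage) : Stage :=
  {| car := next_car S; ge := next_ge S; pob := next_pob S; pmo := next_pmo S |}.

Definition empty_stage : Stage :=
  {| car := Empty_set; ge := fun _ _ => False; pob := fun x => match x with end;
     pmo := fun x => match x with end |}.

(** [stage n] is A_I^{n-1} (with p_I^{n-1}); [stage 0] = A_I^{-1} = ∅. *)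
Fixpoint stage (n : nat) : Stage :=
  match n with
  | O => empty_stage
  | S m => next (stage m)
  end.

(** Elements of A_I = ⋃_n A_I^n: every element is born in exactly one B_I^n;
    [existT n b] is the element b of B_I^n = Bel (stage n). *)
Definition AI : Type := { n : nat & Bel (stage n) }.

Fixpoint emb (n : nat) : car (stage n) -> AI :=
  match n as n0 return car (stage n0) -> AI with
  | O => fun x => match x with end
  | S m => fun x => match x with
                    | inl a => emb m a
                    | inr b => existT _ m b
                    end
  end.

Definition pI (x : AI) : Ob I := bv (projT2 x).

Fixpoint pI_emb (n : nat) : forall c : car (stage n), pI (emb n c) = pob (stage n) c :=
  match n as n0 return forall c : car (stage n0), pI (emb n0 c) = pob (stage n0) c with
  | O => fun c => match c with end
  | S m => fun c => match c as c0 return pI (emb (S m) c0) = pob (stage (S m)) c0 with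
                    | inl a => pI_emb m a
                    | inr b => eq_refl
                    end
  end.

Inductive AMor : AI -> AI -> Type :=
| AMor_refl (x : AI) : AMor x x
| AMor_step (n : nat) (b : Bel (stage n)) (c : car (stage n)) (hc : bR b c) :
    AMor (existT _ n b) (emb n c).

Definition pI_mor (x y : AI) (h : AMor x y) : Hom (pI x) (pI y) :=
  match h in AMor x0 y0 return Hom (pI x0) (pI y0) with
  | AMor_refl x => cid (pI x)
  | AMor_step n b c hc => castHom (eq_sym (pI_emb n c)) (bf b c hc)
  end.

Definition over_ob (i : Ob I) : Type := { a : AI & Hom (pI a) i }.

Definition over_mor (i : Ob I) (x y : over_ob i) : Prop :=
  exists h : AMor (projT1 x) (projT1 y), ccomp (projT2 y) (pI_mor _ _ h) = projT2 x.

Definition nonempty_connected_over (i : Ob I) : Prop :=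
  inhabited (over_ob i) /\
  (forall x y : over_ob i, clos_refl_sym_trans (over_ob i) (over_mor i) x y).

Definition pI_cofinal : Prop := forall i : Ob I, nonempty_connected_over i.

End Construction.

From Stdlib Require Import List Relations ProofIrrelevance Classical ClassicalEpsilon.

(* Every object (b, u : p(b) -> i) of the over category is joined to the
   object (z, id_i), where z is the element of B^0 given by the empty section
   and the value i.  If b lives in stage n, the copy t of z in the next stage is
   minimal, so R = {x | x <= b} ∪ {t} is a finite section.  A cone over R with
   vertex c consists of a map f : c -> p(b) together with u ∘ f : c -> i, and
   it is compatible exactly when f equalizes u and p(b -> t) (if b > t at all);
   directedness supplies such an f.  The resulting element e of A_I maps to
   both b and t over i, which gives the zigzag b <- e -> z. *)

Section Construction.
Variable I : Cat.

Record wf_stage (S : Stage I) : Prop := {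
  wf_ge_refl : forall x, ge I S x x;
  wf_ge_trans : forall x y z, ge I S x y -> ge I S y z -> ge I S x z;
  wf_pmo_refl : forall x h, pmo I S x x h = cid (pob I S x);
  wf_pmo_comp : forall x y z h1 h2 h3,
      pmo I S x z h3 = ccomp (pmo I S y z h2) (pmo I S x y h1);
  wf_down_finite : forall a, exists l, forall x, ge I S a x -> In x l
}.

Lemma empty_stage_wf : wf_stage (empty_stage I).
Proof. split; intros []. Qed.

Lemma next_wf (S : Stage I) : wf_stage S -> wf_stage (next I S).
Proof.
  intros [Hrefl Htrans Hid Hcomp Hfin]; split.
  - intros [x|x]; simpl; [apply Hrefl | reflexivity].
  - intros [x|x] [y|y] [z|z]; simpl; try tauto; intros Hxy Hyz.
    + eapply Htrans; eauto.
    + eapply bsec; eauto.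
    + subst; auto.
    + congruence.
  - intros [x|x]; simpl; intros h; [apply Hid |].
    rewrite (proof_irrelevance _ h eq_refl); reflexivity.
  - intros [x|x] [y|y] [z|z]; simpl; intros h1 h2 h3; try tauto.
    + apply Hcomp.
    + symmetry; apply bcone.
    + subst y; simpl. rewrite ccomp_id_r. f_equal. apply proof_irrelevance.
    + subst y z. rewrite (proof_irrelevance _ h3 eq_refl); simpl.
      rewrite ccomp_id_l; reflexivity.
  - intros [a|b].
    + destruct (Hfin a) as [l Hl]. exists (map inl l).
      intros [x|x]; simpl; [|tauto]. intros h. apply in_map. auto.
    + destruct (bfin _ _ b) as [l Hl]. exists (inr b :: map inl l).
      intros [x|x]; simpl; intros h.
      * right. apply in_map. auto.
      * left. congruence.
Qed.

Lemma stage_wf (n : nat) : wf_stage (stage I n).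
Proof. induction n; [apply empty_stage_wf | apply next_wf; assumption]. Qed.

Lemma castHom_comp (a b c c' : Ob I) (e : c = c') (x : Hom b c) (y : Hom a b) :
  castHom e (ccomp x y) = ccomp (castHom e x) y.
Proof. destruct e; reflexivity. Qed.

Lemma castHom_trans (a b c d : Ob I) (e1 : b = c) (e2 : c = d) (h : Hom a b) :
  castHom e2 (castHom e1 h) = castHom (eq_trans e1 e2) h.
Proof. destruct e1, e2; reflexivity. Qed.

Lemma castHom_loop (a b : Ob I) (e : b = b) (h : Hom a b) : castHom e h = h.
Proof. rewrite (proof_irrelevance _ e eq_refl); reflexivity. Qed.

Lemma pI_mor_eq_rect (x y y' : AI I) (e : y = y') (h : AMor I x y) :
  pI_mor I x y' (eq_rect y (AMor I x) h y' e) = castHom (f_equal (pI I) e) (pI_mor I x y h).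
Proof. destruct e; reflexivity. Qed.

Section Extension.
Variable S : Stage I.
Hypothesis wfS : wf_stage S.
Variables a t : car I S.
Hypothesis t_minimal : forall y, ge I S t y -> y = t.
Variable c : Ob I.
Variable f : Hom c (pob I S a).
Variable g : Hom c (pob I S t).
Hypothesis fg_compat : forall h : ge I S a t, ccomp (pmo I S a t h) f = g.

Definition ext_R (x : car I S) : Prop := ge I S a x \/ x = t.

Lemma ext_R_not_below (x : car I S) : ext_R x -> ~ ge I S a x -> x = t.
Proof. intros [h|h] n; [contradiction | exact h]. Qed.

Definition ext_cone (x : car I S) (hx : ext_R x) : Hom c (pob I S x) :=
  match excluded_middle_informative (ge I S a x) with
  | left h => ccomp (pmo I S a x h) f
  | right nh => eq_rect t (fun y => Hom c (pob I S y)) g x (eq_sym (ext_R_not_below x hx nh))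
  end.

Lemma ext_cone_below (x : car I S) hx h : ext_cone x hx = ccomp (pmo I S a x h) f.
Proof.
  unfold ext_cone. destruct (excluded_middle_informative _) as [h'|n]; [|contradiction].
  rewrite (proof_irrelevance _ h' h); reflexivity.
Qed.

Lemma ext_cone_t ht : ext_cone t ht = g.
Proof.
  unfold ext_cone. destruct (excluded_middle_informative _) as [h|n]; [apply fg_compat |].
  rewrite (proof_irrelevance _ (eq_sym (ext_R_not_below t ht n)) eq_refl); reflexivity.
Qed.

Lemma ext_R_finite : exists l, forall x, ext_R x -> In x l.
Proof.
  destruct (wf_down_finite S wfS a) as [l Hl]. exists (t :: l).
  intros x [h|h]; simpl; [right; auto | left; auto].
Qed.

Lemma ext_R_section (x y : car I S) : ext_R x -> ge I S x y -> ext_R y.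
Proof.
  intros [h|h] hxy.
  - left. eapply wf_ge_trans; eauto.
  - subst. right. apply t_minimal; assumption.
Qed.

Lemma ext_cone_natural (x y : car I S) (hx : ext_R x) (hy : ext_R y) (h : ge I S x y) :
  ccomp (pmo I S x y h) (ext_cone x hx) = ext_cone y hy.
Proof.
  destruct (classic (ge I S a x)) as [ha|na].
  - assert (hb : ge I S a y) by (eapply wf_ge_trans; eauto).
    rewrite (ext_cone_below x hx ha), (ext_cone_below y hy hb), ccomp_assoc.
    rewrite (wf_pmo_comp S wfS a x y ha h hb); reflexivity.
  - pose proof (ext_R_not_below x hx na); subst x.
    pose proof (t_minimal y h); subst y.
    rewrite wf_pmo_refl, ccomp_id_l by assumption.
    f_equal; apply proof_irrelevance.
Qed.

Definition ext_bel : Bel I S :=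
  {| bR := ext_R; bfin := ext_R_finite; bsec := ext_R_section;
     bv := c; bf := ext_cone; bcone := ext_cone_natural |}.

End Extension.

Variable i : Ob I.

Definition base_bel : Bel I (stage I 0) :=
  {| bR := fun _ => False; bfin := ex_intro _ nil (fun x (h : False) => False_ind _ h);
     bsec := fun x y (h : False) _ => h; bv := i;
     bf := fun c (h : False) => False_rect _ h;
     bcone := fun c d (hc : False) _ _ => False_ind _ hc |}.

Definition base_obj : over_ob I i := existT _ (existT _ 0 base_bel) (cid i).

(** [base_in_stage k] is [base_bel] viewed as an element of A_I^k. *)
Fixpoint base_in_stage (k : nat) : car I (stage I (S k)) :=
  match k as k0 return car I (stage I (S k0)) with
  | O => inr base_bel
  | S k' => inl (base_in_stage k')
  end.

Lemma base_in_stage_minimal (k : nat) y :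
  ge I (stage I (S k)) (base_in_stage k) y -> y = base_in_stage k.
Proof.
  revert y; induction k as [|k IHk].
  - intros [[]|y]; simpl. intros; subst; reflexivity.
  - intros [y|y]; simpl; [|tauto]. intros h. f_equal. apply IHk, h.
Qed.

Lemma emb_base_in_stage (k : nat) : emb I (S k) (base_in_stage k) = existT _ 0 base_bel.
Proof. induction k; [reflexivity | exact IHk]. Qed.

Lemma pob_base_in_stage (k : nat) : pob I (stage I (S k)) (base_in_stage k) = i.
Proof. induction k; [reflexivity | exact IHk]. Qed.

Section Zigzag.
Variable n : nat.
Variable b : Bel I (stage I n).
Variable u : Hom (bv I _ b) i.
Variable c : Ob I.
Variable f : Hom c (bv I _ b).

Let t := base_in_stage n.
Let u' : Hom (bv I _ b) (pob I (stage I (S n)) t) := castHom (eq_sym (pob_base_in_stage n)) u.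

Hypothesis f_equalizes : forall h : ge I (stage I (S n)) (inr b) t,
  ccomp (pmo I (stage I (S n)) (inr b) t h) f = ccomp u' f.

Let e := ext_bel (stage I (S n)) (stage_wf (S n)) (inr b) t (base_in_stage_minimal n)
           c f (ccomp u' f).
Let e_obj : over_ob I i := existT _ (existT _ (S n) e) (ccomp u f).

Lemma ext_over_source : over_mor I i e_obj (existT _ (existT _ n b) u).
Proof.
  assert (hb : ext_R (stage I (S n)) (inr b) t (inr b))
    by (left; apply wf_ge_refl, stage_wf).
  exists (AMor_step I (S n) e (inr b) hb); simpl.
  change (ccomp u (ext_cone (stage I (S n)) (inr b) t c f (ccomp u' f) (inr b) hb) = ccomp u f).
  rewrite (ext_cone_below _ _ _ _ _ _ _ _ (wf_ge_refl _ (stage_wf (S n)) (inr b))).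
  rewrite wf_pmo_refl, ccomp_id_l by apply stage_wf. reflexivity.
Qed.

Lemma ext_over_base : over_mor I i e_obj base_obj.
Proof.
  assert (ht : ext_R (stage I (S n)) (inr b) t t) by (right; reflexivity).
  exists (eq_rect _ (AMor I (existT _ (S n) e)) (AMor_step I (S n) e t ht) _
            (emb_base_in_stage n)).
  rewrite pI_mor_eq_rect; simpl.
  change (ccomp (cid i) (castHom (f_equal (pI I) (emb_base_in_stage n))
     (castHom (eq_sym (pI_emb I (S n) t))
        (ext_cone (stage I (S n)) (inr b) t c f (ccomp u' f) t ht))) = ccomp u f).
  rewrite ext_cone_t by exact f_equalizes.
  unfold u'. rewrite !castHom_comp, !castHom_trans, castHom_loop, ccomp_id_l.
  reflexivity.
Qed.

Lemma over_zigzag_to_base :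
  clos_refl_sym_trans (over_ob I i) (over_mor I i) (existT _ (existT _ n b) u) base_obj.
Proof.
  apply rst_trans with e_obj.
  - apply rst_sym, rst_step, ext_over_source.
  - apply rst_step, ext_over_base.
Qed.

End Zigzag.

Lemma over_connected_to_base
  (Heq : forall (s t : Ob I) (f g : Hom s t), exists (u : Ob I) (h : Hom u s), ccomp f h = ccomp g h)
  (x : over_ob I i) :
  clos_refl_sym_trans (over_ob I i) (over_mor I i) x base_obj.
Proof.
  destruct x as [[n b] u]; simpl in u.
  set (t := base_in_stage n).
  set (u' := castHom (eq_sym (pob_base_in_stage n)) u).
  destruct (classic (ge I (stage I (S n)) (inr b) t)) as [h|nh].
  - destruct (Heq _ _ (pmo I (stage I (S n)) (inr b) t h) u') as [c [f Hf]].
    apply (over_zigzag_to_base n b u c f).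
    intros h'. rewrite (proof_irrelevance _ h' h). exact Hf.
  - apply (over_zigzag_to_base n b u (bv I _ b) (cid _)). intros h; contradiction.
Qed.

End Construction.

Theorem lemma3p10 (I : Cat) (HI : directed I) : pI_cofinal I.
Proof.
  destruct HI as [_ [_ Heq]]. intros i. split.
  - constructor. exact (base_obj I i).
  - intros x y. apply rst_trans with (base_obj I i).
    + apply over_connected_to_base; assumption.
    + apply rst_sym, over_connected_to_base; assumption.
Qed.
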